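(* Let $n\ge1$, $\omega,\varphi\in\mathbb{R}^n$, $\mathbf{a}\in\mathbb{R}^{n\times n}$ with rows $a_1,\dots,a_n\in\mathbb{R}^n$ (entries $a_{ij}$), $b,c\in\mathbb{R}^n$, $d\in\mathbb{R}$, and let $$f(x)=\sum_{i=1}^n c_i\sin\Big(\sum_{j=1}^n a_{ij}\sin(\omega_jx+\varphi_j)+b_i\Big)+d.$$ For $\mathbf{k}\in\mathbb{Z}^n$, $u\in\mathbb{R}^n$ and $\beta\in\mathbb{R}$ put $\alpha_{\mathbf{k}}(u)=\prod_{j=1}^nJ_{k_j}(u_j)$, $A_{\mathbf{k}}(u,\beta)=\alpha_{\mathbf{k}}(u)\sin(\langle\mathbf{k},\varphi\rangle+\beta)$, $B_{\mathbf{k}}(u,\beta)=\alpha_{\mathbf{k}}(u)\cos(\langle\mathbf{k},\varphi\rangle+\beta)$, and let $A_{\mathbf{k}}=(A_{\mathbf{k}}(a_1,b_1),\dots,A_{\mathbf{k}}(a_n,b_n))$, $B_{\mathbf{k}}=(B_{\mathbf{k}}(a_1,b_1),\dots,B_{\mathbf{k}}(a_n,b_n))$. Then for all $x\in\mathbb{R}$, $$f(x)=\sum_{\mathbf{k}\in\mathbb{Z}^n}\langle c,A_{\mathbf{k}}\rangle\cos\big(\langle\mathbf{k},\omega\rangle x\big)+\langle c,B_{\mathbf{k}}\rangle\sin\big(\langle\mathbf{k},\omega\rangle x\big)+d.$$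
   Context: $J_k$ is the Bessel function of the first kind of integer order $k$; $\langle\cdot,\cdot\rangle$ is the standard inner product on $\mathbb{R}^n$ (so $\langle\mathbf{k},\omega\rangle=\sum_jk_j\omega_j$). The function $f$ is a sinusoidal network with one hidden layer of width $n$: first layer $x\mapsto\sin(\omega x+\varphi)$, hidden layer $y\mapsto\sin(\mathbf{a}y+b)$, linear output $z\mapsto\langle c,z\rangle+d$. *)

From HB Require Import structures.
From mathcomp Require Import all_boot all_order all_algebra finmap.
From mathcomp Require Import all_classical all_reals all_analysis.
Set Implicit Arguments. Unset Strict Implicit. Unset Printing Implicit Defensive.
Import Order.TTheory GRing.Theory Num.Theory.
Local Open Scope ring_scope.

Definition besselJnat {R : realType} (m : nat) (x : R) : R :=
  limn (fun N : nat => \sum_(0 <= j < N)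
    ((-1) ^+ j / ((j`!)%:R * ((j + m)`!)%:R) * (x / 2) ^+ (2 * j + m))).

(* Integer order: J_{-m} = (-1)^m J_m. *)
Definition besselJ {R : realType} (k : int) (x : R) : R :=
  match k with
  | Posz m => besselJnat m x
  | Negz m => (-1) ^+ m.+1 * besselJnat m.+1 x
  end.

(* Unconditional (net-of-finite-subsets) convergence of a sum indexed by an
   arbitrary choiceType I: the finite partial sums over A converge to l as A
   grows through the finite subsets of I ordered by inclusion. *)
Definition has_sum {I : choiceType} {R : realType} (u : I -> R) (l : R) : Prop :=
  forall e : R, 0 < e -> exists A0 : {fset I}, forall A : {fset I},
    (A0 `<=` A)%fset -> `| (\sum_(i <- A) u i) - l | < e.

Definition zvec (n : nat) := {ffun 'I_n -> int}.

Definition zdot {R : realType} (n : nat) (k : zvec n) (v : 'I_n -> R) : R :=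
  \sum_(j < n) (k j)%:~R * v j.

Definition alpha {R : realType} (n : nat) (k : zvec n) (u : 'I_n -> R) : R :=
  \prod_(j < n) besselJ (k j) (u j).

Definition sinnet {R : realType} (n : nat) (omega phi : 'I_n -> R)
  (a : 'M[R]_n) (b c : 'I_n -> R) (d : R) (x : R) : R :=
  \sum_(i < n) c i * sin (\sum_(j < n) a i j * sin (omega j * x + phi j) + b i) + d.

(* Everything rests on the Jacobi-Anger expansion
     e^(i z sin t) = sum_(k in Z) J_k(z) e^(i k t).
   Multiply the exponential series of (z/2) e^(i t) and -(z/2) e^(-i t): the
   double series over (p, q) converges absolutely, so it may be summed along
   the fibres of p + q, which by the binomial theorem gives the exponential
   series of i z sin t, or along the fibres of p - q, which gives
   J_k(z) e^(i k t).  Absolute convergence also lets us multiply these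
   expansions over the n hidden inputs, giving an expansion over Z^n of
   exp(i sum_j a_ij sin(omega_j x + phi_j)); multiplying by e^(i b_i) and
   taking imaginary parts expands each hidden unit, and expanding
   sin(<k, omega> x + (<k, phi> + b_i)) gives the stated coefficients. *)

From HB Require Import structures.
From mathcomp Require Import all_boot all_order all_algebra finmap.
From mathcomp Require Import all_classical all_reals all_analysis.
From mathcomp Require Import complex ring lra zify.
Import Order.TTheory GRing.Theory Num.Theory numFieldNormedType.Exports.
Local Open Scope ring_scope.
Set Implicit Arguments. Unset Strict Implicit.

Section UnconditionalSums.
Variable R : realType.
Implicit Types (I J K : choiceType).

Lemma big_fset_seq (V : nmodType) I (A : {fset I}) (s : seq I) (F : I -> V) :
  A =i s -> uniq s -> \sum_(i <- A) F i = \sum_(i <- s) F i.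
Proof. by move=> As us; apply/perm_big/uniq_perm; rewrite ?fset_uniq. Qed.

Lemma ler_sum_fset I (A B : {fset I}) (F : I -> R) :
  (A `<=` B)%fset -> (forall i, i \in B -> 0 <= F i) ->
  \sum_(i <- A) F i <= \sum_(i <- B) F i.
Proof.
move=> AB F0; rewrite [leRHS](big_fsetID _ (mem A)) /=.
have -> : \sum_(i <- [fset i | i in B & i \in A]%fset) F i = \sum_(i <- A) F i.
  apply: eq_fbigl => i; rewrite !inE /= andbC.
  by apply/andP/idP => [[]//|iA]; rewrite iA (fsubsetP AB).
rewrite lerDl big_seq sumr_ge0 // => i; rewrite !inE => /andP[+ _]; exact: F0.
Qed.

Lemma has_sum_unique I (u : I -> R) l1 l2 :
  has_sum u l1 -> has_sum u l2 -> l1 = l2.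
Proof.
move=> h1 h2; apply/eqP; rewrite -subr_eq0 -normr_le0; apply/ler_addgt0Pr => e e0.
have e2 : 0 < e / 2 by rewrite divr_gt0.
have [A1 H1] := h1 _ e2; have [A2 H2] := h2 _ e2.
have := H1 (A1 `|` A2)%fset (fsubsetUl _ _).
have := H2 (A1 `|` A2)%fset (fsubsetUr _ _).
set S := \sum_(i <- _) _ => b a.
have := ler_normB (S - l2) (S - l1).
have -> : S - l2 - (S - l1) = l1 - l2 by ring.
lra.
Qed.

Lemma eq_has_sum I (u v : I -> R) l : u =1 v -> has_sum u l -> has_sum v l.
Proof. by move=> /boolp.funext ->. Qed.

Lemma has_sum0 I : has_sum (fun _ : I => 0 : R) 0.
Proof. by move=> e e0; exists fset0 => A _; rewrite big1 // subrr normr0. Qed.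

Lemma has_sumD I (u v : I -> R) l m :
  has_sum u l -> has_sum v m -> has_sum (fun i => u i + v i) (l + m).
Proof.
move=> hu hv e e0; have e2 : 0 < e / 2 by rewrite divr_gt0.
have [A1 H1] := hu _ e2; have [A2 H2] := hv _ e2.
exists (A1 `|` A2)%fset => A sA; rewrite big_split /=.
have := H1 A (fsubset_trans (fsubsetUl _ _) sA).
have := H2 A (fsubset_trans (fsubsetUr _ _) sA).
set a := \sum_(i <- A) u i; set b := \sum_(i <- A) v i => hb ha.
have := ler_normD (a - l) (b - m).
have -> : a - l + (b - m) = a + b - (l + m) by ring.
lra.
Qed.

Lemma has_sumZ I (u : I -> R) c l :
  has_sum u l -> has_sum (fun i => c * u i) (c * l).
Proof.
move=> hu e e0; have c1 : 0 < `|c| + 1 by rewrite ltr_wpDl.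
have [A0 H0] := hu _ (divr_gt0 e0 c1); exists A0 => A sA.
rewrite -mulr_sumr -mulrBr normrM.
apply: le_lt_trans (ler_wpM2l (normr_ge0 c) (ltW (H0 A sA))) _.
by rewrite mulrA ltr_pdivrMr // mulrDr mulr1 mulrC ltrDl.
Qed.

Lemma has_sumB I (u v : I -> R) l m :
  has_sum u l -> has_sum v m -> has_sum (fun i => u i - v i) (l - m).
Proof.
move=> hu /(has_sumZ (-1)) hv; rewrite -mulN1r.
by apply: eq_has_sum (has_sumD hu hv) => i; rewrite mulN1r.
Qed.

Lemma has_sum_sum I (X : Type) (s : seq X) (u : X -> I -> R) (l : X -> R) :
  (forall x, has_sum (u x) (l x)) ->
  has_sum (fun i => \sum_(x <- s) u x i) (\sum_(x <- s) l x).
Proof.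
move=> hu; elim: s => [|x s IH].
  by rewrite big_nil; apply: eq_has_sum (@has_sum0 I) => i; rewrite big_nil.
by rewrite big_cons; apply: eq_has_sum (has_sumD (hu x) IH) => i; rewrite big_cons.
Qed.

Lemma has_sum_finite I (u : I -> R) (A : {fset I}) :
  (forall i, i \notin A -> u i = 0) -> has_sum u (\sum_(i <- A) u i).
Proof.
move=> uA e e0; exists A => B AB.
by rewrite -(big_fset_incl _ AB) ?subrr ?normr0 // => i _ /uA.
Qed.

Lemma ge0_sum_le_has_sum I (u : I -> R) l (A : {fset I}) :
  (forall i, 0 <= u i) -> has_sum u l -> \sum_(i <- A) u i <= l.
Proof.
move=> u0 hu; apply/ler_addgt0Pr => e e0; have [A0 H0] := hu _ e0.
have AA0 : \sum_(i <- A) u i <= \sum_(i <- (A `|` A0)%fset) u i.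
  exact: ler_sum_fset (fsubsetUl _ _) (fun i _ => u0 i).
have := H0 _ (fsubsetUr A _); rewrite ltr_norml; lra.
Qed.

Definition abs_summable I (u : I -> R) :=
  exists M, forall A : {fset I}, \sum_(i <- A) `|u i| <= M.

Lemma abs_summable_le I (u v : I -> R) :
  (forall i, `|v i| <= `|u i|) -> abs_summable u -> abs_summable v.
Proof. by move=> vu [M HM]; exists M => A; apply: le_trans (HM A); apply: ler_sum. Qed.

Lemma abs_summableD I (u v : I -> R) :
  abs_summable u -> abs_summable v -> abs_summable (fun i => u i + v i).
Proof.
move=> [M HM] [N HN]; exists (M + N) => A.
apply: le_trans (lerD (HM A) (HN A)); rewrite -big_split /=.
by apply: ler_sum => i _; apply: ler_normD.
Qed.

Lemma abs_summableZ I (u : I -> R) c :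
  abs_summable u -> abs_summable (fun i => c * u i).
Proof.
move=> [M HM]; exists (`|c| * M) => A.
by under eq_bigr do rewrite normrM; rewrite -mulr_sumr ler_wpM2l.
Qed.

Lemma abs_summableB I (u v : I -> R) :
  abs_summable u -> abs_summable v -> abs_summable (fun i => u i - v i).
Proof.
move=> hu /(abs_summableZ (-1)) hv.
by apply: abs_summable_le (abs_summableD hu hv) => i; rewrite mulN1r.
Qed.

Lemma abs_summable_finite I (u : I -> R) (A : {fset I}) :
  (forall i, i \notin A -> u i = 0) -> abs_summable u.
Proof.
move=> uA; exists (\sum_(i <- A) `|u i|) => B.
rewrite [leLHS](big_fsetID _ (mem A)) /= [X in _ + X]big1_fset ?addr0; last first.
  by move=> i; rewrite !inE /= => /andP[_ /uA ->]; rewrite normr0.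
apply: ler_sum_fset => [|i _]; last exact: normr_ge0.
by apply/fsubsetP => i; rewrite !inE => /andP[].
Qed.

Lemma ge0_bounded_has_sum I (u : I -> R) M :
  (forall i, 0 <= u i) -> (forall A : {fset I}, \sum_(i <- A) u i <= M) ->
  exists l, has_sum u l.
Proof.
move=> u0 uM; pose E := range (fun A : {fset I} => \sum_(i <- A) u i).
have supE : has_sup E.
  by split; [exists 0, fset0; rewrite ?big_seq_fset0 | exists M => _ [A _ <-]].
exists (sup E) => e e0; have [_ [A0 _ <-] hA0] := sup_adherent e0 supE.
exists A0 => A A0A.
have h1 : \sum_(i <- A0) u i <= \sum_(i <- A) u i by apply: ler_sum_fset.
have h2 : \sum_(i <- A) u i <= sup E by apply: sup_upper_bound => //; exists A.
rewrite ler0_norm ?subr_le0 //; lra.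
Qed.

Lemma abs_summable_has_sum_parts I (u : I -> R) : abs_summable u ->
  exists P N, [/\ has_sum u^\+ P, has_sum u^\- N & has_sum u (P - N)].
Proof.
move=> [M HM].
have parts_le i : u^\+ i <= `|u i| /\ u^\- i <= `|u i|.
  by have := congr1 (@^~ i) (funrposDneg u) => /= <-; rewrite lerDl lerDr !funrpos_ge0.
have [P hP] : exists P, has_sum u^\+ P.
  apply: (ge0_bounded_has_sum (funrpos_ge0 u)) => A.
  by apply: le_trans (HM A); apply: ler_sum => i _; case: (parts_le i).
have [N hN] : exists N, has_sum u^\- N.
  apply: (ge0_bounded_has_sum (funrneg_ge0 u)) => A.
  by apply: le_trans (HM A); apply: ler_sum => i _; case: (parts_le i).
exists P, N; split => //; apply: eq_has_sum (has_sumB hP hN) => i.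
by rewrite -[in RHS](funrposBneg u).
Qed.

Lemma abs_summable_has_sum I (u : I -> R) : abs_summable u -> exists l, has_sum u l.
Proof. by move=> /abs_summable_has_sum_parts[P [N [_ _ hu]]]; exists (P - N). Qed.

Lemma fsub_iota (A : {fset nat}) N :
  (\max_(k <- A) k < N)%N -> (A `<=` seq_fset tt (iota 0 N))%fset.
Proof.
move=> AN; apply/fsubsetP => k kA; rewrite seq_fsetE mem_iota /=.
exact: leq_ltn_trans (leq_bigmax_seq (F := id) _ _ _) AN.
Qed.

Lemma big_fset_iota (u : nat -> R) N :
  \sum_(k <- seq_fset tt (iota 0 N)) u k = series u N.
Proof.
rewrite (@big_fset_seq _ _ _ (iota 0 N)) => [|k|]; last exact: iota_uniq.
  by rewrite /series /= /index_iota subn0.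
by rewrite seq_fsetE.
Qed.

Lemma has_sum_cvg_series (u : nat -> R) l : has_sum u l -> (series u @ \oo --> l)%classic.
Proof.
move=> hu; apply/cvgrPdist_lt => e e0; have [A0 H0] := hu e e0.
exists (\max_(k <- A0) k).+1 => // N /= A0N.
by rewrite distrC -big_fset_iota; apply/H0/fsub_iota.
Qed.

Lemma ge0_sum_fset_le_series (u : nat -> R) (A : {fset nat}) :
  (forall k, 0 <= u k) -> exists N, \sum_(k <- A) u k <= series u N.
Proof.
move=> u0; exists (\max_(k <- A) k).+1; rewrite -big_fset_iota.
exact: ler_sum_fset (fsub_iota _) (fun k _ => u0 k).
Qed.

Lemma fset_preimage I J (h : J -> I) (A : {fset I}) :
  injective h -> exists B : {fset J}, forall j, (j \in B) = (h j \in A).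
Proof.
move=> h_inj; suff [B HB] : exists B : {fset J}, forall j, (j \in B) = (h j \in (A : seq I)).
  by exists B.
elim: (A : seq I) => [|i s [B HB]]; first by exists fset0 => j; rewrite inE.
have [[j0 <-]|not_img] := boolp.pselect (exists j0, h j0 = i).
  by exists (j0 |` B)%fset => j; rewrite !inE HB (inj_eq h_inj).
exists B => j; rewrite inE HB; case: eqP => //= hj.
by case: not_img; exists j.
Qed.

Lemma has_sum_reindex I J (h : J -> I) (u : I -> R) :
  injective h -> (forall i, (forall j, h j <> i) -> u i = 0) ->
  forall l, has_sum u l <-> has_sum (u \o h) l.
Proof.
move=> h_inj u_img l.
have sum_img (B : {fset J}) : \sum_(i <- [fset h j | j in B]%fset) u i = \sum_(j <- B) u (h j).
  by rewrite big_imfset //= => j1 j2 _ _ /h_inj.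
have out_img (B : {fset J}) (A : {fset I}) i : (forall j, h j \in A -> j \in B) ->
    i \in A -> i \notin [fset h j | j in B]%fset -> u i = 0.
  move=> AB iA iB; apply: u_img => j hj; move: iB; rewrite -hj.
  by rewrite mem_imfset //= AB ?hj.
split=> [hu e e0 | hv e e0].
  have [A0 H0] := hu e e0; have [B0 HB0] := fset_preimage A0 h_inj.
  exists B0 => B B0B; rewrite /= -sum_img.
  rewrite (big_fset_incl _ (fsubsetUr A0 _)) ?H0 ?fsubsetUl // => i.
  rewrite inE => /orP[iA0 | -> //]; apply: out_img iA0 => j.
  by rewrite -HB0 => /(fsubsetP B0B).
have [B0 H0] := hv e e0; exists [fset h j | j in B0]%fset => A B0A.
have [B HB] := fset_preimage A h_inj.
have B0B : (B0 `<=` B)%fset.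
  by apply/fsubsetP => j jB0; rewrite HB (fsubsetP B0A) // in_imfset.
have := H0 B B0B; rewrite /= -sum_img (big_fset_incl _ (_ : _ `<=` A)%fset) //.
  by apply/fsubsetP => _ /imfsetP[j /= + ->]; rewrite HB.
by move=> i iA; apply: out_img iA => j; rewrite HB.
Qed.

Lemma abs_summable_comp I J (h : J -> I) (u : I -> R) :
  injective h -> abs_summable u -> abs_summable (u \o h).
Proof.
move=> h_inj [M HM]; exists M => B; apply: le_trans (HM [fset h j | j in B]%fset).
by rewrite big_imfset //= => j1 j2 _ _ /h_inj.
Qed.

Lemma sum_fsetM I J (A1 : {fset I}) (A2 : {fset J}) (f : I -> R) (g : J -> R) :
  \sum_(p <- (A1 `*` A2)%fset) f p.1 * g p.2 =
  (\sum_(i <- A1) f i) * (\sum_(j <- A2) g j).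
Proof.
rewrite big_imfset2 /=; last by move=> [i j] [i' j'] _ _ [/= -> ->].
by rewrite big_distrl; apply: eq_bigr => i _; rewrite big_distrr.
Qed.

Lemma ler_sum_fset_pair I J (A : {fset I * J}) (f : I -> R) (g : J -> R) :
  (forall i, 0 <= f i) -> (forall j, 0 <= g j) ->
  \sum_(p <- A) f p.1 * g p.2 <=
  (\sum_(i <- [fset p.1 | p in A]%fset) f i) * (\sum_(j <- [fset p.2 | p in A]%fset) g j).
Proof.
move=> f0 g0; rewrite -sum_fsetM; apply: ler_sum_fset => [|p _]; last exact: mulr_ge0.
by apply/fsubsetP => p pA; rewrite in_fsetM !in_imfset.
Qed.

Lemma abs_summable_prod I J (u : I -> R) (v : J -> R) :
  abs_summable u -> abs_summable v -> abs_summable (fun p : I * J => u p.1 * v p.2).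
Proof.
move=> [M HM] [N HN]; exists (M * N) => A.
have M0 : 0 <= M by apply: le_trans (HM fset0); rewrite big_seq_fset0.
under eq_bigr do rewrite normrM.
apply: le_trans (ler_sum_fset_pair _ (fun i => normr_ge0 (u i)) (fun j => normr_ge0 (v j))) _.
by apply: ler_pM => //; apply: sumr_ge0.
Qed.

Lemma ge0_has_sum_prod I J (u : I -> R) (v : J -> R) U V :
  (forall i, 0 <= u i) -> (forall j, 0 <= v j) -> has_sum u U -> has_sum v V ->
  has_sum (fun p : I * J => u p.1 * v p.2) (U * V).
Proof.
move=> u0 v0 hu hv e e0.
have U0 : 0 <= U by have := ge0_sum_le_has_sum fset0 u0 hu; rewrite big_seq_fset0.
have V0 : 0 <= V by have := ge0_sum_le_has_sum fset0 v0 hv; rewrite big_seq_fset0.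
have UV1 : 0 < U + V + 1 by lra.
have [P1 H1] := hu _ (divr_gt0 e0 UV1); have [P2 H2] := hv _ (divr_gt0 e0 UV1).
exists (P1 `*` P2)%fset => A P12A; set d := e / (U + V + 1).
have de : d * (U + V + 1) = e by rewrite divfK // gt_eqF.
set x := \sum_(i <- P1) u i; set y := \sum_(j <- P2) v j.
have lower : x * y <= \sum_(p <- A) u p.1 * v p.2.
  by rewrite -sum_fsetM; apply: ler_sum_fset => // p _; apply: mulr_ge0.
have upper : \sum_(p <- A) u p.1 * v p.2 <= U * V.
  apply: le_trans (ler_sum_fset_pair _ u0 v0) _.
  by apply: ler_pM; rewrite ?sumr_ge0 ?(ge0_sum_le_has_sum _ u0) ?(ge0_sum_le_has_sum _ v0).
have x0 : 0 <= x by rewrite sumr_ge0.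
have xU : x <= U := ge0_sum_le_has_sum _ u0 hu.
have /andP[hx _] : - d < x - U < d by rewrite -ltr_norml; apply: H1.
have /andP[hy _] : - d < y - V < d by rewrite -ltr_norml; apply: H2.
(* with S the sum over A: U V - S <= U V - x y = (U - x) V + x (V - y) < d (U + V) *)
rewrite ler0_norm ?subr_le0 //; nra.
Qed.

Lemma has_sum_prod I J (u : I -> R) (v : J -> R) U V :
  abs_summable u -> abs_summable v -> has_sum u U -> has_sum v V ->
  has_sum (fun p : I * J => u p.1 * v p.2) (U * V).
Proof.
move=> /abs_summable_has_sum_parts[Pu [Nu [hPu hNu hu']]].
move=> /abs_summable_has_sum_parts[Pv [Nv [hPv hNv hv']]] hu hv.
rewrite (has_sum_unique hu hu') (has_sum_unique hv hv').
have parts (T : Type) (f : T -> R) x : f x = f^\+ x - f^\- x.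
  by have /(congr1 (@^~ x)) := funrposBneg f.
have hPP := ge0_has_sum_prod (funrpos_ge0 u) (funrpos_ge0 v) hPu hPv.
have hPN := ge0_has_sum_prod (funrpos_ge0 u) (funrneg_ge0 v) hPu hNv.
have hNP := ge0_has_sum_prod (funrneg_ge0 u) (funrpos_ge0 v) hNu hPv.
have hNN := ge0_has_sum_prod (funrneg_ge0 u) (funrneg_ge0 v) hNu hNv.
have -> : (Pu - Nu) * (Pv - Nv) = Pu * Pv - Pu * Nv - Nu * Pv + Nu * Nv by ring.
apply: eq_has_sum (has_sumD (has_sumB (has_sumB hPP hPN) hNP) hNN) => p.
by rewrite (parts _ u p.1) (parts _ v p.2); ring.
Qed.

Definition fiber I K (V : zmodType) (g : I -> K) (u : I -> V) (k : K) (i : I) : V :=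
  if g i == k then u i else 0.

Lemma upward_fset_all I K (Q : K -> {fset I} -> Prop) (B : seq K) :
  (forall k, exists F0 : {fset I}, forall F, (F0 `<=` F)%fset -> Q k F) ->
  exists F0 : {fset I}, forall F, (F0 `<=` F)%fset -> forall k, k \in B -> Q k F.
Proof.
move=> hQ; elim: B => [|k B [F0 H0]]; first by exists fset0.
have [F1 H1] := hQ k; exists (F0 `|` F1)%fset => F F01F k'.
rewrite inE => /orP[/eqP -> | k'B].
  by apply: H1; apply: fsubset_trans F01F; apply: fsubsetUr.
by apply: H0 k'B; apply: fsubset_trans F01F; apply: fsubsetUl.
Qed.

Lemma sum_fiber I K (g : I -> K) (u : I -> R) (B : {fset K}) (F : {fset I}) :
  \sum_(k <- B) \sum_(i <- F) fiber g u k i =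
  \sum_(i <- [fset i in F | g i \in B]%fset) u i.
Proof.
rewrite -big_fset_condE [RHS]big_mkcond exchange_big /=; apply: eq_bigr => i _.
have [giB|giNB] := boolP (g i \in B).
  rewrite (big_fsetD1 (g i)) //= /fiber eqxx big1_fset ?addr0 // => k.
  by rewrite !inE => /andP[+ _] _; rewrite eq_sym => /negbTE ->.
rewrite big1_fset // => k kB _; rewrite /fiber.
by case: eqP => // gik; rewrite gik kB in giNB.
Qed.

Lemma sum_fset_cst I (B : {fset I}) (c : R) : \sum_(k <- B) c = c * (size B)%:R.
Proof. by rewrite big_const_seq count_predT iter_addr_0 mulr_natr. Qed.

Lemma has_sum_regroup I K (g : I -> K) (u : I -> R) (s : K -> R) L :
  has_sum u L -> (forall k, has_sum (fiber g u k) (s k)) -> has_sum s L.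
Proof.
move=> hu hs e e0; have e2 : 0 < e / 2 by rewrite divr_gt0.
have [P HP] := hu _ e2; exists [fset g i | i in P]%fset => B PB.
set n : R := (size B)%:R; have n1 : 0 < n + 1 by rewrite ltr_wpDl ?ler0n.
set d := e / 2 / (n + 1); have d0 : 0 < d by rewrite divr_gt0.
have dn : d * n + d = e / 2 by rewrite -[X in _ + X]mulr1 -mulrDr divfK ?gt_eqF.
have [F0 HF0] := upward_fset_all
  (Q := fun k F => `|\sum_(i <- F) fiber g u k i - s k| < d) B (fun k => hs k d d0).
pose F := (F0 `|` P)%fset; set X := \sum_(k <- B) \sum_(i <- F) fiber g u k i.
have close_u : `|X - L| < e / 2.
  rewrite /X sum_fiber; apply: HP; apply/fsubsetP => i iP.
  by rewrite !inE /= (fsubsetP PB) ?in_imfset ?iP ?orbT.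
have close_s : `|X - \sum_(k <- B) s k| <= d * n.
  rewrite /X -sumrB -sum_fset_cst; apply: le_trans (ler_norm_sum _ _ _) _.
  rewrite big_seq [leRHS]big_seq; apply: ler_sum => k kB.
  by apply/ltW/HF0 => //; apply: fsubsetUl.
have := ler_normB (X - L) (X - \sum_(k <- B) s k).
have -> : X - L - (X - \sum_(k <- B) s k) = \sum_(k <- B) s k - L by ring.
lra.
Qed.

Lemma abs_summable_regroup I K (g : I -> K) (u : I -> R) (s : K -> R) :
  abs_summable u -> (forall k, has_sum (fiber g u k) (s k)) -> abs_summable s.
Proof.
move=> [M HM] hs; exists (M + 1) => B.
set n : R := (size B)%:R; have n1 : 0 < n + 1 by rewrite ltr_wpDl ?ler0n.
set d := 1 / (n + 1); have d0 : 0 < d by rewrite divr_gt0.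
have dn : d * n + d = 1 by rewrite -[X in _ + X]mulr1 -mulrDr divfK ?gt_eqF.
have [F HF] := upward_fset_all
  (Q := fun k F => `|\sum_(i <- F) fiber g u k i - s k| < d) B (fun k => hs k d d0).
have {}HF := HF F (fsubset_refl _).
have fiber_close : \sum_(k <- B) `|s k| <= \sum_(k <- B) (`|\sum_(i <- F) fiber g u k i| + d).
  rewrite big_seq [leRHS]big_seq; apply: ler_sum => k kB.
  have := ler_normB (\sum_(i <- F) fiber g u k i) (\sum_(i <- F) fiber g u k i - s k).
  by rewrite opprB addrC subrK; have := HF k kB; lra.
have fiber_le : \sum_(k <- B) `|\sum_(i <- F) fiber g u k i| <= M.
  apply: le_trans (HM [fset i in F | g i \in B]%fset).
  rewrite -sum_fiber; apply: ler_sum => k _; apply: le_trans (ler_norm_sum _ _ _) _.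
  by apply: ler_sum => i _; rewrite /fiber; case: eqP; rewrite ?normr0.
move: fiber_close; rewrite big_split /= sum_fset_cst; lra.
Qed.

End UnconditionalSums.

Local Open Scope complex_scope.

Section ComplexSums.
Variable R : realType.
Local Notation C := R[i].
Local Notation Re := (@complex.Re R).
Local Notation Im := (@complex.Im R).
Implicit Types (I J K : choiceType).

Lemma ReM (x y : C) : Re (x * y) = Re x * Re y - Im x * Im y.
Proof. by case: x y => [a b] [c d]. Qed.

Lemma ImM (x y : C) : Im (x * y) = Re x * Im y + Im x * Re y.
Proof. by case: x y => [a b] [c d]. Qed.

Lemma Re_rM (a : R) (w : C) : Re (a%:C * w) = a * Re w.
Proof. by rewrite ReM /= mul0r subr0. Qed.

Lemma Im_rM (a : R) (w : C) : Im (a%:C * w) = a * Im w.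
Proof. by rewrite ImM /= mul0r addr0. Qed.

Lemma complexP (x y : C) : Re x = Re y -> Im x = Im y -> x = y.
Proof. by case: x y => [a b] [c d] /= -> ->. Qed.

Lemma Re_sum (X : Type) (s : seq X) (F : X -> C) :
  Re (\sum_(x <- s) F x) = \sum_(x <- s) Re (F x).
Proof.
elim: s => [|x s IH]; first by rewrite !big_nil.
by rewrite !big_cons -IH; case: (F x) => a b; case: (\sum_(y <- s) F y).
Qed.

Lemma Im_sum (X : Type) (s : seq X) (F : X -> C) :
  Im (\sum_(x <- s) F x) = \sum_(x <- s) Im (F x).
Proof.
elim: s => [|x s IH]; first by rewrite !big_nil.
by rewrite !big_cons -IH; case: (F x) => a b; case: (\sum_(y <- s) F y).
Qed.

Definition has_sumC I (u : I -> C) (l : C) :=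
  has_sum (fun i => Re (u i)) (Re l) /\ has_sum (fun i => Im (u i)) (Im l).

Definition abs_summableC I (u : I -> C) :=
  abs_summable (fun i => Re (u i)) /\ abs_summable (fun i => Im (u i)).

Lemma eq_has_sumC I (u v : I -> C) l : u =1 v -> has_sumC u l -> has_sumC v l.
Proof. by move=> /boolp.funext ->. Qed.

Lemma eq_abs_summableC I (u v : I -> C) : u =1 v -> abs_summableC u -> abs_summableC v.
Proof. by move=> /boolp.funext ->. Qed.

Lemma abs_summableC_has_sumC I (u : I -> C) : abs_summableC u -> exists l, has_sumC u l.
Proof.
by move=> [/abs_summable_has_sum[a ha] /abs_summable_has_sum[b hb]]; exists (a +i* b).
Qed.

Lemma has_sumC_finite I (u : I -> C) (A : {fset I}) :
  (forall i, i \notin A -> u i = 0) -> has_sumC u (\sum_(i <- A) u i).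
Proof.
by move=> uA; rewrite /has_sumC Re_sum Im_sum; split; apply: has_sum_finite => i /uA ->.
Qed.

Lemma has_sumCZ I (u : I -> C) c l : has_sumC u l -> has_sumC (fun i => c * u i) (c * l).
Proof.
move=> [hRe hIm]; rewrite /has_sumC ReM ImM; split.
  apply: eq_has_sum (has_sumB (has_sumZ (Re c) hRe) (has_sumZ (Im c) hIm)) => i.
  by rewrite ReM.
by apply: eq_has_sum (has_sumD (has_sumZ (Re c) hIm) (has_sumZ (Im c) hRe)) => i; rewrite ImM.
Qed.

Lemma has_sumC_real I (f : I -> R) l (w : C) :
  has_sum f l -> has_sumC (fun i => (f i)%:C * w) (l%:C * w).
Proof.
move=> hf; rewrite /has_sumC Re_rM Im_rM ![l * _]mulrC.
by split; apply: eq_has_sum (has_sumZ _ hf) => i; rewrite ?Re_rM ?Im_rM mulrC.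
Qed.

Lemma has_sumC_prod I J (u : I -> C) (v : J -> C) U V :
  abs_summableC u -> abs_summableC v -> has_sumC u U -> has_sumC v V ->
  has_sumC (fun p : I * J => u p.1 * v p.2) (U * V).
Proof.
move=> [aRe aIm] [aRe' aIm'] [hRe hIm] [hRe' hIm']; rewrite /has_sumC ReM ImM; split.
  have := has_sumB (has_sum_prod aRe aRe' hRe hRe') (has_sum_prod aIm aIm' hIm hIm').
  by apply: eq_has_sum => p; rewrite ReM.
have := has_sumD (has_sum_prod aRe aIm' hRe hIm') (has_sum_prod aIm aRe' hIm hRe').
by apply: eq_has_sum => p; rewrite ImM.
Qed.

Lemma abs_summableC_prod I J (u : I -> C) (v : J -> C) :
  abs_summableC u -> abs_summableC v -> abs_summableC (fun p : I * J => u p.1 * v p.2).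
Proof.
move=> [aRe aIm] [aRe' aIm']; split.
  have := abs_summableB (abs_summable_prod aRe aRe') (abs_summable_prod aIm aIm').
  by apply: abs_summable_le => p; rewrite ReM.
have := abs_summableD (abs_summable_prod aRe aIm') (abs_summable_prod aIm aRe').
by apply: abs_summable_le => p; rewrite ImM.
Qed.

Lemma Re_fiber I K (g : I -> K) (u : I -> C) k i :
  Re (fiber g u k i) = fiber g (fun i => Re (u i)) k i.
Proof. by rewrite /fiber; case: (g i == k). Qed.

Lemma Im_fiber I K (g : I -> K) (u : I -> C) k i :
  Im (fiber g u k i) = fiber g (fun i => Im (u i)) k i.
Proof. by rewrite /fiber; case: (g i == k). Qed.

Lemma has_sumC_regroup I K (g : I -> K) (u : I -> C) (s : K -> C) L :
  has_sumC u L -> (forall k, has_sumC (fiber g u k) (s k)) -> has_sumC s L.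
Proof.
move=> [hRe hIm] hs; split.
  apply: (has_sum_regroup (g := g) hRe) => k; have [h _] := hs k.
  by apply: eq_has_sum h => i; rewrite Re_fiber.
apply: (has_sum_regroup (g := g) hIm) => k; have [_ h] := hs k.
by apply: eq_has_sum h => i; rewrite Im_fiber.
Qed.

Lemma abs_summableC_regroup I K (g : I -> K) (u : I -> C) (s : K -> C) :
  abs_summableC u -> (forall k, has_sumC (fiber g u k) (s k)) -> abs_summableC s.
Proof.
move=> [aRe aIm] hs; split.
  apply: (abs_summable_regroup (g := g) aRe) => k; have [h _] := hs k.
  by apply: eq_has_sum h => i; rewrite Re_fiber.
apply: (abs_summable_regroup (g := g) aIm) => k; have [_ h] := hs k.
by apply: eq_has_sum h => i; rewrite Im_fiber.
Qed.

Lemma has_sumC_reindex I J (h : J -> I) (u : I -> C) :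
  injective h -> (forall i, (forall j, h j <> i) -> u i = 0) ->
  forall l, has_sumC u l <-> has_sumC (u \o h) l.
Proof.
move=> h_inj u_img l; rewrite /has_sumC.
by rewrite !(has_sum_reindex h_inj) // => i /u_img ->.
Qed.

Lemma abs_summableC_comp I J (h : J -> I) (u : I -> C) :
  injective h -> abs_summableC u -> abs_summableC (u \o h).
Proof.
move=> h_inj [aRe aIm].
by split; [exact: abs_summable_comp h_inj aRe | exact: abs_summable_comp h_inj aIm].
Qed.

End ComplexSums.

Section ImaginaryExponential.
Variable R : realType.
Local Notation C := R[i].
Local Notation Re := (@complex.Re R).
Local Notation Im := (@complex.Im R).

Definition cis (t : R) : C := cos t +i* sin t.

Lemma cisD a b : cis (a + b) = cis a * cis b.
Proof. by apply: complexP; rewrite ?ReM ?ImM /= ?sinD ?cosD //; ring. Qed.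

Lemma cis0 : cis 0 = 1.
Proof. by apply: complexP; rewrite /= ?cos0 ?sin0. Qed.

Lemma cisX t p : cis t ^+ p = cis (p%:R * t).
Proof.
elim: p => [|p IH]; first by rewrite expr0 mul0r cis0.
by rewrite exprS IH -cisD mulrSr mulrDl mul1r addrC.
Qed.

Definition exp_term (q : C) (p : nat) : C := (p`!%:R^-1)%:C * q ^+ p.

Lemma exp_term_rcis (a t : R) p :
  exp_term (a%:C * cis t) p = (exp_coeff a p)%:C * cis (p%:R * t).
Proof. by rewrite /exp_term exprMn cisX mulrA -rmorphXn -rmorphM [_^-1 * _]mulrC. Qed.

Lemma abs_summable_exp_coeff (r : R) : abs_summable (exp_coeff r).
Proof.
exists (expR `|r|) => A.
have [N HN] := ge0_sum_fset_le_series A (fun k => normr_ge0 (exp_coeff r k)).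
apply: le_trans HN _.
have -> : series (fun k => `|exp_coeff r k|) N = series (exp_coeff `|r|) N.
  by apply: eq_bigr => k _; rewrite /exp_coeff /= normrM normfV normrX normr_nat.
apply: nondecreasing_cvgn_le; last exact: is_cvg_series_exp_coeff.
by apply: nondecreasing_series => n _ _; apply: exp_coeff_ge0.
Qed.

Lemma abs_summableC_exp_term (a t : R) : abs_summableC (exp_term (a%:C * cis t)).
Proof.
split; apply: abs_summable_le (abs_summable_exp_coeff a) => p;
  rewrite exp_term_rcis ?Re_rM ?Im_rM normrM /=; apply: ler_piMr => //.
  exact: cos_max.
exact: sin_max.
Qed.

Lemma expr_imag (t : R) m : (0 +i* t) ^+ m =
  ((~~ odd m)%:R * (-1) ^+ m./2 * t ^+ m) +i* ((odd m)%:R * (-1) ^+ m.-1./2 * t ^+ m) :> C.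
Proof.
elim: m => [|m IH]; first by apply: complexP; rewrite /= ?expr0 ?mulr1.
have half_pred : odd m -> m.-1./2 = m./2.
  by case: m {IH} => // m; rewrite -uphalfE uphalf_half oddS => /negbTE ->.
rewrite exprS IH -uphalfE uphalf_half [t ^+ m.+1]exprS; apply: complexP => /=.
  case om: (odd m) => /=; last by ring.
  by rewrite half_pred // add1n exprS; ring.
by case: (odd m) => /=; ring.
Qed.

Lemma Re_exp_term_imag t m : Re (exp_term (0 +i* t) m) = cos_coeff t m.
Proof. by rewrite /exp_term Re_rM expr_imag /= mulrC. Qed.

Lemma Im_exp_term_imag t m : Im (exp_term (0 +i* t) m) = sin_coeff t m.
Proof. by rewrite /exp_term Im_rM expr_imag /= mulrC. Qed.

Lemma has_sumC_exp_term_imag t L : has_sumC (exp_term (0 +i* t)) L -> L = cis t.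
Proof.
move=> [/(eq_has_sum (Re_exp_term_imag t)) hRe /(eq_has_sum (Im_exp_term_imag t)) hIm].
apply: complexP => /=; rewrite unlock.
  exact/esym/(cvg_lim _ (has_sum_cvg_series hRe)).
exact/esym/(cvg_lim _ (has_sum_cvg_series hIm)).
Qed.

End ImaginaryExponential.

Section JacobiAnger.
Variables (R : realType) (z th : R).
Local Notation C := R[i].
Local Notation jx := ((z / 2)%:C * cis th).
Local Notation jy := ((- (z / 2))%:C * cis (- th)).

Definition pair_term (pq : nat * nat) : C := exp_term jx pq.1 * exp_term jy pq.2.

Definition pair_coeff (pq : nat * nat) : R :=
  exp_coeff (z / 2) pq.1 * exp_coeff (- (z / 2)) pq.2.

Definition bessel_term (m q : nat) : R :=
  (-1) ^+ q / (q`!%:R * (q + m)`!%:R) * (z / 2) ^+ (2 * q + m).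

Lemma pair_termE pq : pair_term pq = (pair_coeff pq)%:C * cis ((pq.1%:R - pq.2%:R) * th).
Proof.
case: pq => p q; rewrite /pair_term !exp_term_rcis /pair_coeff [in RHS]rmorphM /=.
by rewrite mulrBl cisD mulrN; ring.
Qed.

Lemma abs_summable_pair_coeff : abs_summable pair_coeff.
Proof. exact: abs_summable_prod (abs_summable_exp_coeff _) (abs_summable_exp_coeff _). Qed.

Lemma abs_summableC_pair_term : abs_summableC pair_term.
Proof.
exact: abs_summableC_prod (abs_summableC_exp_term _ _) (abs_summableC_exp_term _ _).
Qed.

Lemma jx_add_jy : jx + jy = 0 +i* (z * sin th).
Proof. by apply: complexP; rewrite /= ?cosN ?sinN; field. Qed.

Lemma fact_binomial m i : (i <= m)%N ->
  (m`!%:R)^-1 * 'C(m, i)%:R = ((m - i)`!%:R)^-1 * (i`!%:R)^-1 :> R.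
Proof.
move=> im; rewrite -(bin_fact im) !natrM.
have fact_neq0 k : k`!%:R != 0 :> R by rewrite pnatr_eq0 -lt0n fact_gt0.
have bin_neq0 : 'C(m, i)%:R != 0 :> R by rewrite pnatr_eq0 -lt0n bin_gt0.
by field; rewrite bin_neq0 !fact_neq0.
Qed.

Lemma has_sumC_fiber_add m :
  has_sumC (fiber (fun pq : nat * nat => pq.1 + pq.2)%N pair_term m) (exp_term (jx + jy) m).
Proof.
(* The fibre is finite and its sum is the binomial expansion of (jx + jy)^m / m!. *)
pose s := [seq (m - j, j)%N | j <- iota 0 m.+1].
have us : uniq s by rewrite map_inj_uniq ?iota_uniq // => j1 j2 [].
have supp pq : pq \notin seq_fset tt s ->
    fiber (fun pq : nat * nat => pq.1 + pq.2)%N pair_term m pq = 0.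
  case: pq => p q; rewrite seq_fsetE /fiber /=; case: eqP => // pqm.
  by move=> /negP[]; apply/mapP; exists q; rewrite ?mem_iota; [lia | congr pair; lia].
have := has_sumC_finite supp; congr has_sumC.
rewrite (big_fset_seq _ (s := s)) => [|pq|//]; last by rewrite seq_fsetE.
rewrite /s; have -> : iota 0 m.+1 = index_iota 0 m.+1 by rewrite /index_iota subn0.
rewrite big_map big_mkord /exp_term exprDn mulr_sumr.
apply: eq_bigr => i _; have im : (i <= m)%N by rewrite -ltnS ltn_ord.
rewrite /fiber /= subnK // eqxx /pair_term /exp_term /= -[_ *+ 'C(m, i)]mulr_natl [RHS]mulrA.
have := congr1 (real_complex R) (fact_binomial im); rewrite !rmorphM rmorph_nat => ->.
by ring.
Qed.

Lemma pair_coeff_shiftl m q : pair_coeff ((q + m)%N, q) = bessel_term m q.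
Proof.
rewrite /pair_coeff /bessel_term /exp_coeff /= (exprNn (z / 2)) mul2n -addnn !exprD.
by rewrite invfM; ring.
Qed.

Lemma pair_coeff_shiftr m q : pair_coeff (q, (q + m)%N) = (-1) ^+ m * bessel_term m q.
Proof.
rewrite /pair_coeff /bessel_term /exp_coeff /= (exprNn (z / 2)) mul2n -addnn !exprD.
by rewrite invfM; ring.
Qed.

Lemma has_sum_bessel_term m : has_sum (bessel_term m) (besselJnat m z).
Proof.
have shift_inj : injective (fun q : nat => ((q + m)%N, q)) by move=> q1 q2 [].
have /abs_summable_has_sum[l hl] : abs_summable (bessel_term m).
  have := abs_summable_comp shift_inj abs_summable_pair_coeff.
  by apply: abs_summable_le => q; rewrite /= pair_coeff_shiftl.
by rewrite [besselJnat m z](cvg_lim _ (has_sum_cvg_series hl)).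
Qed.

Local Notation diff := (fun pq : nat * nat => pq.1%:Z - pq.2%:Z).

Lemma has_sum_fiber_diff k : has_sum (fiber diff pair_coeff k) (besselJ k z).
Proof.
(* The fibre of k is {(q + k, q)} for k >= 0 and {(q, q - k)} for k < 0. *)
case: k => m /=.
  have shift_inj : injective (fun q : nat => ((q + m)%N, q)) by move=> q1 q2 [].
  have img pq : (forall q, ((q + m)%N, q) <> pq) -> fiber diff pair_coeff m pq = 0.
    case: pq => p q not_img; rewrite /fiber; case: eqP => //= pqm.
    by case: (not_img q); congr pair; lia.
  apply/(has_sum_reindex shift_inj img); apply: eq_has_sum (has_sum_bessel_term m) => q.
  by rewrite /fiber /= ifT ?pair_coeff_shiftl //; apply/eqP; lia.
have shift_inj : injective (fun q : nat => (q, (q + m.+1)%N)) by move=> q1 q2 [].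
have img pq : (forall q, (q, (q + m.+1)%N) <> pq) -> fiber diff pair_coeff (Negz m) pq = 0.
  case: pq => p q not_img; rewrite /fiber; case: eqP => //= pqm.
  by case: (not_img p); congr pair; rewrite NegzE in pqm; lia.
apply/(has_sum_reindex shift_inj img).
apply: eq_has_sum (has_sumZ ((-1) ^+ m.+1) (has_sum_bessel_term m.+1)) => q.
by rewrite /fiber /= ifT ?pair_coeff_shiftr //; apply/eqP; rewrite NegzE; lia.
Qed.

Lemma fiber_diff_pair_term k pq :
  fiber diff pair_term k pq = (fiber diff pair_coeff k pq)%:C * cis (k%:~R * th).
Proof.
rewrite /fiber; case: eqP => [<-|_]; last by rewrite mul0r.
by rewrite pair_termE intrB.
Qed.

Lemma jacobi_anger :
  has_sumC (fun k : int => (besselJ k z)%:C * cis (k%:~R * th)) (cis (z * sin th)) /\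
  abs_summableC (fun k : int => (besselJ k z)%:C * cis (k%:~R * th)).
Proof.
have [L hL] := abs_summableC_has_sumC abs_summableC_pair_term.
have fibers k : has_sumC (fiber diff pair_term k) ((besselJ k z)%:C * cis (k%:~R * th)).
  apply: eq_has_sumC (has_sumC_real _ (has_sum_fiber_diff k)) => pq.
  by rewrite fiber_diff_pair_term.
have -> : cis (z * sin th) = L.
  apply/esym/has_sumC_exp_term_imag; rewrite -jx_add_jy.
  exact: has_sumC_regroup hL has_sumC_fiber_add.
split; first exact: has_sumC_regroup hL fibers.
exact: abs_summableC_regroup abs_summableC_pair_term fibers.
Qed.

End JacobiAnger.

Section SeveralVariables.
Variable R : realType.
Local Notation C := R[i].
Local Notation Im := (@complex.Im R).

Definition ffun_split (T : Type) n (k : {ffun 'I_n.+1 -> T}) : T * {ffun 'I_n -> T} :=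
  (k ord0, [ffun j => k (lift ord0 j)]).

Definition ffun_join (T : Type) n (p : T * {ffun 'I_n -> T}) : {ffun 'I_n.+1 -> T} :=
  [ffun j => if unlift ord0 j is Some j' then p.2 j' else p.1].

Lemma ffun_splitK T n : cancel (@ffun_split T n) (@ffun_join T n).
Proof.
move=> k; apply/ffunP => j; rewrite ffunE /=.
by case: (unliftP ord0 j) => [j'|] ->; rewrite ?ffunE.
Qed.

Lemma ffun_joinK T n : cancel (@ffun_join T n) (@ffun_split T n).
Proof.
case=> t k; rewrite /ffun_split ffunE unlift_none; congr pair.
by apply/ffunP => j; rewrite !ffunE liftK.
Qed.

Lemma has_sumC_prod_ffun (T : choiceType) n (u : 'I_n -> T -> C) (U : 'I_n -> C) :
  (forall j, has_sumC (u j) (U j) /\ abs_summableC (u j)) ->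
  has_sumC (fun k : {ffun 'I_n -> T} => \prod_(j < n) u j (k j)) (\prod_(j < n) U j) /\
  abs_summableC (fun k : {ffun 'I_n -> T} => \prod_(j < n) u j (k j)).
Proof.
elim: n u U => [|n IH] u U hu.
  pose k0 : {ffun 'I_0 -> T} := ffun0 (card_ord 0).
  have supp k : k \notin [fset k0]%fset -> \prod_(j < 0) u j (k j) = 0.
    by rewrite (_ : k = k0) ?inE ?eqxx //; apply/ffunP => -[].
  have := has_sumC_finite supp; rewrite big_seq_fset1 !big_ord0 => h; split => //.
  by split; apply: (abs_summable_finite (A := [fset k0]%fset)) => k /supp ->.
have [hs0 ha0] := hu ord0.
have [hs ha] := IH (fun j => u (lift ord0 j)) (fun j => U (lift ord0 j)) (fun j => hu _).
have split_inj := can_inj (@ffun_splitK T n).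
have split_img (p : T * {ffun 'I_n -> T}) : (forall k, ffun_split k <> p) -> False.
  by move=> /(_ (ffun_join p)); rewrite ffun_joinK.
have prod_split (k : {ffun 'I_n.+1 -> T}) : \prod_(j < n.+1) u j (k j) =
    u ord0 (ffun_split k).1 * \prod_(j < n) u (lift ord0 j) ((ffun_split k).2 j).
  by rewrite big_ord_recl; congr (_ * _); apply: eq_bigr => j _; rewrite ffunE.
split.
  rewrite big_ord_recl; have := has_sumC_prod ha0 ha hs0 hs.
  move=> /(has_sumC_reindex split_inj (fun p img => False_ind _ (split_img p img))).
  by apply: eq_has_sumC => k; rewrite prod_split.
have := abs_summableC_comp split_inj (abs_summableC_prod ha0 ha).
by apply: eq_abs_summableC => k; rewrite prod_split.
Qed.

Lemma prod_rcis (X : Type) (s : seq X) (f g : X -> R) :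
  \prod_(x <- s) ((f x)%:C * cis (g x)) = (\prod_(x <- s) f x)%:C * cis (\sum_(x <- s) g x).
Proof. by rewrite big_split /= (big_morph (@cis R) (@cisD R) (@cis0 R)) rmorph_prod. Qed.

Lemma has_sum_sin_bessel n (a th : 'I_n -> R) (b : R) :
  has_sum (fun k : zvec n => alpha k a * sin (b + zdot k th))
    (sin (b + \sum_(j < n) a j * sin (th j))).
Proof.
have [h _] := has_sumC_prod_ffun (fun j => jacobi_anger (a j) (th j)).
have [_ h'] := has_sumCZ (cis b) h.
move: h'; rewrite -(big_morph (@cis R) (@cisD R) (@cis0 R)) -cisD.
by apply: eq_has_sum => k; rewrite prod_rcis mulrCA -cisD Im_rM.
Qed.

Lemma zdot_affine n (k : zvec n) (w p : 'I_n -> R) (x : R) :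
  zdot k (fun j => w j * x + p j) = zdot k w * x + zdot k p.
Proof. by rewrite /zdot mulr_suml -big_split /=; apply: eq_bigr => j _; ring. Qed.

End SeveralVariables.

Local Close Scope complex_scope.

Theorem theorem4 (R : realType) (n : nat) (hn : (1 <= n)%N)
  (omega phi : 'I_n -> R) (a : 'M[R]_n) (b c : 'I_n -> R) (d : R) :
  let A (k : zvec n) (i : 'I_n) : R :=
    alpha k (fun j => a i j) * sin (zdot k phi + b i) in
  let B (k : zvec n) (i : 'I_n) : R :=
    alpha k (fun j => a i j) * cos (zdot k phi + b i) in
  forall x : R,
  exists l : R,
    has_sum (fun k : zvec n =>
        (\sum_(i < n) c i * A k i) * cos (zdot k omega * x)
      + (\sum_(i < n) c i * B k i) * sin (zdot k omega * x)) l
    /\ sinnet omega phi a b c d x = l + d.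
Proof.
move=> A B x; pose th j := omega j * x + phi j.
have rows := has_sum_sum (index_enum 'I_n)
  (fun i => has_sumZ (c i) (has_sum_sin_bessel (fun j => a i j) th (b i))).
exists (\sum_(i < n) c i * sin (b i + \sum_(j < n) a i j * sin (th j))); split.
  apply: eq_has_sum rows => k; rewrite /th /A /B zdot_affine.
  set W := zdot k omega * x; set P := zdot k phi.
  rewrite !mulr_suml -big_split /=; apply: eq_bigr => i _.
  by rewrite (addrC (b i)) -addrA [in LHS]sinD; ring.
by rewrite /sinnet; congr (_ + d); apply: eq_bigr => i _; rewrite addrC.
Qed.
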